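(* Let $(W_{i,t})_{i,t\in\mathbb{Z}}$ be i.i.d. real-valued with law $\lambda$ whose support contains $0$. Let $Y_{\cdot,0}=(Y_{i,0})_{i\in\mathbb{Z}}\sim\mu$ independent of the weights and $Y_{\cdot,t+1}=\mathcal A(Y_{\cdot,t},W_{\cdot,t})$. Suppose $\mu$ is invariant ($Y_{\cdot,t}\sim\mu$ for all $t$), $\mathbb{E}|Y_{0,0}|<\infty$, and the array $\{(Y_{i,t},W_{i,t})\}_{i,t}$ is stationary and ergodic under shifts in $i$ and in $t$. Then either $Y_{0,0}\ge0$ a.s. or $Y_{0,0}\le0$ a.s.
   Context: Signed store update for the SJR model: for $Y\in\mathbb{R}^{\mathbb{Z}}$ and $W\in\mathbb{R}^{\mathbb{Z}}$ (with $x^+=\max(x,0)$, $x^-=\max(-x,0)$), $$\mathcal A(Y,W)_i=(Y_i^+-W_i^+)^+-(Y_i^-\wedge W_i^-)+(Y_{i-1}^+\wedge W_{i-1}^+)-(Y_{i-1}^--W_{i-1}^-)^+.$$ *)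

From HB Require Import structures.
From mathcomp Require Import all_boot all_order all_algebra.
From mathcomp Require Import all_classical all_reals all_analysis.
Set Implicit Arguments. Unset Strict Implicit. Unset Printing Implicit Defensive.
Import Order.TTheory GRing.Theory Num.Theory.
Import numFieldNormedType.Exports.
Local Open Scope classical_set_scope.
Local Open Scope ring_scope.

Section SJR.
Variable R : realType.

Definition pos_part (x : R) : R := Num.max x 0.
Definition neg_part (x : R) : R := Num.max (- x) 0.

Definition store_update (Y W : int -> R) (i : int) : R :=
  pos_part (pos_part (Y i) - pos_part (W i))
  - Num.min (neg_part (Y i)) (neg_part (W i))
  + Num.min (pos_part (Y (i - 1)%R)) (pos_part (W (i - 1)%R))
  - pos_part (neg_part (Y (i - 1)%R) - neg_part (W (i - 1)%R)).
End SJR.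

Section Prob.
Context {d : measure_display} {T : measurableType d} {R : realType}.
Variable P : probability T R.

Definition cyl_event {I : Type} (X : I -> T -> R) (s : seq I) (B : I -> set R)
  : set T := \big[setI/setT]_(k <- s) (X k @^-1` B k).

Definition mutually_independent {I : eqType} (X : I -> T -> R) : Prop :=
  forall (s : seq I) (B : I -> set R), uniq s -> (forall k, measurable (B k)) ->
    P (cyl_event X s B) = (\prod_(k <- s) P (X k @^-1` B k))%E.

(* independence of two families of random variables (of the sigma-algebras
   they generate, tested on the pi-systems of finite cylinder events) *)
Definition indep_families {I J : Type} (X : I -> T -> R) (Z : J -> T -> R) : Prop :=
  forall (s1 : seq I) (B1 : I -> set R) (s2 : seq J) (B2 : J -> set R),
    (forall k, measurable (B1 k)) -> (forall k, measurable (B2 k)) ->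
    P (cyl_event X s1 B1 `&` cyl_event Z s2 B2) =
    (P (cyl_event X s1 B1) * P (cyl_event Z s2 B2))%E.

Definition same_law {I : Type} (X X' : I -> T -> R) : Prop :=
  forall (s : seq I) (B : I -> set R), (forall k, measurable (B k)) ->
    P (cyl_event X s B) = P (cyl_event X' s B).

Definition coord_cylinders (I : Type) : set (set (I -> R)) :=
  [set A | exists (j : I) (B : set R), measurable B /\ A = [set f | B (f j)]].

Definition path_measurable {I : Type} (A : set (I -> R)) : Prop :=
  <<s @coord_cylinders I >> A.

Definition stationary_under {I : Type} (sigma : I -> I) (X : I -> T -> R) : Prop :=
  same_law (fun j => X (sigma j)) X.

Definition ergodic_under {I : Type} (sigma : I -> I) (X : I -> T -> R) : Prop :=
  forall A : set (I -> R), path_measurable A ->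
    (forall f, A (f \o sigma) <-> A f) ->
    P ((fun w => fun j => X j w) @^-1` A) = 0%E \/
    P ((fun w => fun j => X j w) @^-1` A) = 1%E.
End Prob.

(* the array {(Y_{i,t}, W_{i,t})} encoded as a real family indexed by
   ((i,t), b): b = false gives Y_{i,t}, b = true gives W_{i,t} *)
Definition pair_array {T : Type} {R : Type} (Y W : int -> nat -> T -> R)
  (k : (int * nat) * bool) : T -> R :=
  if k.2 then W k.1.1 k.1.2 else Y k.1.1 k.1.2.

Definition shift_i (k : (int * nat) * bool) : (int * nat) * bool :=
  ((k.1.1 + 1)%R, k.1.2, k.2).
Definition shift_t (k : (int * nat) * bool) : (int * nat) * bool :=
  (k.1.1, k.1.2.+1, k.2).

From HB Require Import structures.
From mathcomp Require Import all_boot all_order all_algebra.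
From mathcomp Require Import all_classical all_reals all_analysis.
From mathcomp Require Import lra measurable_realfun.
Set Implicit Arguments. Unset Strict Implicit. Unset Printing Implicit Defensive.
Import Order.TTheory GRing.Theory Num.Theory.
Local Open Scope classical_set_scope.
Local Open Scope ring_scope.

(* Write A(Y,W)_i = stay(Y_i, W_i) + move(Y_{i-1}, W_{i-1}), where the part of a
   store that stays and the part that moves right satisfy |stay| + |move| = |Y_i|.
   Invariance of mu makes E|Y_{i,t}| constant in t, and stationarity in i gives
   E|move(Y_{i-1}, W_{i-1})| = E|move(Y_i, W_i)|; hence the triangle inequality
   |stay_i + move_{i-1}| <= |stay_i| + |move_{i-1}| is an almost sure equality, so
   a.s. a positive staying store never meets a negative incoming one.
   If Y_{0,0} took both signs with positive probability, ergodicity in i would give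
   n > 0 and dl > 0 with P(Y_{0,0} < -dl, Y_{n,0} > dl) > 0, and by independence the
   weights on [0,n] x [0,n) are moreover all below dl/n with positive probability.
   With such small weights a negative store moves almost entirely one site to the
   right per step while a positive one almost entirely stays, so the negative front
   started at 0 runs into the positive store at n: a cancellation. *)

Lemma normrD_lt_gt0_lt0 (R : realDomainType) (a b : R) :
  0 < a -> b < 0 -> `|a + b| < `|a| + `|b|.
Proof.
move=> a_gt0 b_lt0; rewrite (gtr0_norm a_gt0) (ltr0_norm b_lt0) ltr_norml.
by apply/andP; split; lra.
Qed.

Section StayMove.
Context {R : realType}.
Implicit Types y w e : R.

Definition stay_part y w :=
  pos_part (pos_part y - pos_part w) - Num.min (neg_part y) (neg_part w).
Definition move_part y w :=
  Num.min (pos_part y) (pos_part w) - pos_part (neg_part y - neg_part w).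

Lemma store_updateE (Y W : int -> R) i :
  store_update Y W i = stay_part (Y i) (W i) + move_part (Y (i - 1)) (W (i - 1)).
Proof. by rewrite /store_update /stay_part /move_part !addrA. Qed.

Lemma pos_part_ge0 y : 0 <= pos_part y.
Proof. by rewrite /pos_part le_max lexx orbT. Qed.

Lemma neg_part_ge0 y : 0 <= neg_part y.
Proof. by rewrite /neg_part le_max lexx orbT. Qed.

Lemma le_pos_part y : y <= pos_part y.
Proof. by rewrite /pos_part le_max lexx. Qed.

Lemma ger0_pos_part {y} : 0 <= y -> pos_part y = y.
Proof. by move=> y0; rewrite /pos_part max_l. Qed.

Lemma ler0_pos_part {y} : y <= 0 -> pos_part y = 0.
Proof. by move=> y0; rewrite /pos_part max_r. Qed.

Lemma ler0_neg_part {y} : y <= 0 -> neg_part y = - y.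
Proof. by move=> y0; rewrite /neg_part max_l // oppr_ge0. Qed.

Lemma ger0_neg_part {y} : 0 <= y -> neg_part y = 0.
Proof. by move=> y0; rewrite /neg_part max_r // oppr_le0. Qed.

Lemma pos_part_le_norm y : pos_part y <= `|y|.
Proof. by rewrite /pos_part ge_max normr_ge0 ler_norm. Qed.

Lemma neg_part_le_norm y : neg_part y <= `|y|.
Proof. by rewrite /neg_part ge_max normr_ge0 -normrN ler_norm. Qed.

Lemma pos_part_sub_add_min y b : pos_part (y - b) + Num.min y b = y.
Proof.
rewrite /pos_part; case: (leP y b) => [le_yb | lt_by].
  by rewrite max_r ?subr_le0 // add0r.
by rewrite max_l ?subr_ge0 ?ltW // subrK.
Qed.

Lemma ger0_stay_part y w : 0 <= y -> stay_part y w = pos_part (y - pos_part w).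
Proof.
move=> y0; rewrite /stay_part (ger0_pos_part y0) (ger0_neg_part y0).
by rewrite min_l ?neg_part_ge0 // subr0.
Qed.

Lemma ger0_move_part y w : 0 <= y -> move_part y w = Num.min y (pos_part w).
Proof.
move=> y0; rewrite /move_part (ger0_pos_part y0) (ger0_neg_part y0).
by rewrite sub0r [pos_part (- _)]ler0_pos_part ?subr0 // oppr_le0 neg_part_ge0.
Qed.

Lemma ler0_stay_part y w : y <= 0 -> stay_part y w = - Num.min (- y) (neg_part w).
Proof.
move=> y0; rewrite /stay_part (ler0_pos_part y0) (ler0_neg_part y0) sub0r.
by rewrite [pos_part (- _)]ler0_pos_part ?sub0r // oppr_le0 pos_part_ge0.
Qed.

Lemma ler0_move_part y w : y <= 0 -> move_part y w = - pos_part (- y - neg_part w).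
Proof.
move=> y0; rewrite /move_part (ler0_pos_part y0) (ler0_neg_part y0).
by rewrite min_l ?pos_part_ge0 // sub0r.
Qed.

Lemma normr_stay_move y w : `|stay_part y w| + `|move_part y w| = `|y|.
Proof.
have min_ge0 (a b : R) : 0 <= a -> 0 <= b -> 0 <= Num.min a b.
  by move=> a0 b0; rewrite le_min a0 b0.
case: (lerP 0 y) => [y0|/ltW y0].
  rewrite ger0_stay_part // ger0_move_part // !ger0_norm ?pos_part_ge0 //.
    exact: pos_part_sub_add_min.
  exact: (min_ge0 _ _ y0 (pos_part_ge0 _)).
rewrite ler0_stay_part // ler0_move_part // !normrN (ler0_norm y0).
rewrite !ger0_norm ?pos_part_ge0 ?(min_ge0 _ _ _ (neg_part_ge0 _)) ?oppr_ge0 //.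
by rewrite addrC pos_part_sub_add_min.
Qed.

Lemma stay_part_gt {y w e} : 0 < y -> `|w| < e -> y - e < stay_part y w.
Proof.
move=> y0 we; rewrite ger0_stay_part ?ltW //.
apply: (lt_le_trans _ (le_pos_part _)).
by rewrite ltrD2l ltrN2 (le_lt_trans (pos_part_le_norm w)).
Qed.

Lemma move_part_lt {y w e} : y < 0 -> `|w| < e -> move_part y w < y + e.
Proof.
move=> y0 we; rewrite ler0_move_part ?ltW //.
rewrite ltrNl opprD; apply: (lt_le_trans _ (le_pos_part _)).
by rewrite ltrD2l ltrN2 (le_lt_trans (neg_part_le_norm w)).
Qed.
End StayMove.

Definition cancellation {R : realType} (Y W : int -> R) (i : int) : Prop :=
  0 < stay_part (Y i) (W i) /\ move_part (Y (i - 1)) (W (i - 1)) < 0.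

Section Crossing.
Variables (R : realType) (y w : int -> nat -> R) (n : nat) (e : R).
Hypothesis dyn : forall i t, y i t.+1 = store_update (y^~ t) (w^~ t) i.
Hypothesis n_gt0 : (0 < n)%N.
Hypothesis small_w : forall {i t : nat}, (i <= n)%N -> (t < n)%N -> `|w i t| < e.
Hypothesis neg_start : y 0 0 < - (n%:R * e).
Hypothesis pos_start : n%:R * e < y n 0.
Hypothesis no_cancellation : forall (i t : nat), ~ cancellation (y^~ t) (w^~ t) i.

Let e_ge0 : 0 <= e.
Proof. exact: ltW (le_lt_trans (normr_ge0 _) (small_w (leq0n n) n_gt0)). Qed.

Let stay_le0 (i t : nat) : move_part (y (i%:Z - 1) t) (w (i%:Z - 1) t) < 0 ->
  stay_part (y i t) (w i t) <= 0.
Proof.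
move=> mv_lt0; rewrite leNgt; apply/negP => st_gt0.
exact: no_cancellation (conj st_gt0 mv_lt0).
Qed.

Let move_ge0 (i t : nat) : 0 < stay_part (y i t) (w i t) ->
  0 <= move_part (y (i%:Z - 1) t) (w (i%:Z - 1) t).
Proof.
move=> st_gt0; rewrite leNgt; apply/negP => mv_lt0.
exact: no_cancellation (conj st_gt0 mv_lt0).
Qed.

(* The negative front started at site 0 is at site t at time t, and the store at n
   stays positive; each loses at most e per step. *)
Lemma crossing_fronts {t} : (t < n)%N ->
  y t t < - ((n - t)%:R * e) /\ (n - t)%:R * e < y n t.
Proof.
elim: t => [_|t IH lt_tn]; first by rewrite subn0.
have [neg_front pos_front] := IH (ltnW lt_tn).
have dist : (n - t)%:R * e = (n - t.+1)%:R * e + e.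
  by rewrite -(subnSK (ltnW lt_tn)) mulrSr mulrDl mul1r.
have dist_ge0 : 0 <= (n - t.+1)%:R * e by rewrite mulr_ge0.
have prev_t : t.+1%:Z - 1 = t by rewrite -predn_int.
have e0 := e_ge0.
(* Name the products so that lra treats them as atoms. *)
move: dist dist_ge0 neg_front pos_front.
set d := (n - t)%:R * e; set d' := (n - t.+1)%:R * e => dist dist_ge0 neg_front pos_front.
split.
- have y_neg : y t t < 0 by lra.
  have mv := move_part_lt y_neg (small_w (ltnW (ltnW lt_tn)) (ltnW lt_tn)).
  have st := @stay_le0 t.+1 t; rewrite prev_t in st.
  rewrite dyn store_updateE prev_t; lra.
- have y_pos : 0 < y n t by lra.
  have st := stay_part_gt y_pos (small_w (leqnn n) (ltnW lt_tn)).
  have mv := @move_ge0 n t.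
  rewrite dyn store_updateE; lra.
Qed.

Lemma crossing_contradiction : False.
Proof.
have lt_n : (n.-1 < n)%N by rewrite ltn_predL.
have [neg_front pos_front] := crossing_fronts lt_n.
have last_gap : (n - n.-1 = 1)%N by rewrite -(subnSK lt_n) prednK // subnn.
rewrite last_gap mul1r in neg_front pos_front.
have e0 := e_ge0.
have y_pos : 0 < y n n.-1 by lra.
have y_neg : y n.-1 n.-1 < 0 by lra.
have st := stay_part_gt y_pos (small_w (leqnn n) lt_n).
have mv := move_part_lt y_neg (small_w (leq_pred n) lt_n).
apply: (@no_cancellation n n.-1); rewrite /cancellation -predn_int //; split; lra.
Qed.
End Crossing.

Section Transfer.
Context d d' (T : measurableType d) (T' : measurableType d') (R : realType).
Variable mu : {measure set T -> \bar R}.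

Lemma ge0_integral_eq_law (X X' : T -> T') (f : T' -> \bar R) :
  measurable_fun setT X -> measurable_fun setT X' ->
  measurable_fun [set: T'] f -> (forall y, 0 <= f y)%E ->
  (forall A, measurable A -> mu (X @^-1` A) = mu (X' @^-1` A)) ->
  (\int[mu]_x f (X x) = \int[mu]_x f (X' x))%E.
Proof.
move=> mX mX' mf f0 lawXX'.
have push (Z : T -> T') : measurable_fun setT Z ->
    (\int[mu]_x f (Z x) = \int[pushforward mu Z]_y f y)%E.
  by move=> mZ; rewrite ge0_integral_pushforward.
rewrite (push _ mX) (push _ mX'); apply: eq_measure_integral => A mA _.
exact: lawXX'.
Qed.
End Transfer.

Section PairLaw.
Context d d1 d2 (T : measurableType d) (T1 : measurableType d1)
  (T2 : measurableType d2) (R : realType) (P : probability T R).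

Lemma pair_law_eq (Y1 Y2 : T -> T1) (W1 W2 : T -> T2) :
  measurable_fun setT Y1 -> measurable_fun setT W1 ->
  measurable_fun setT Y2 -> measurable_fun setT W2 ->
  (forall A B, measurable A -> measurable B ->
     P (Y1 @^-1` A `&` W1 @^-1` B) = P (Y2 @^-1` A `&` W2 @^-1` B)) ->
  forall C : set (T1 * T2), measurable C ->
  P ((fun x => (Y1 x, W1 x)) @^-1` C) = P ((fun x => (Y2 x, W2 x)) @^-1` C).
Proof.
move=> mY1 mW1 mY2 mW2 rect_eq.
pose law (Y : T -> T1) (W : T -> T2) (mY : measurable_fun setT Y)
    (mW : measurable_fun setT W) :=
  distribution P (HB.pack (fun x => (Y x, W x))
    (isMeasurableFun.Build _ _ _ _ _ (measurable_fun_pair mY mW))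
     : {mfun T >-> (T1 * T2)%type}).
apply: (measure_unique [set A `*` B | A in measurable & B in measurable]
  (fun _ => setT) (measurable_prod_measurableType _ _) _ _ _
  (law _ _ mY1 mW1) (law _ _ mY2 mW2)).
- move=> _ _ [A1 mA1 [B1 mB1 <-]] [A2 mA2 [B2 mB2 <-]].
  exists (A1 `&` A2); first exact: measurableI.
  by exists (B1 `&` B2); [exact: measurableI | rewrite setXI].
- by move=> _; exists setT => //; exists setT => //; rewrite setXTT.
- by rewrite bigcup_const.
- by move=> _ [A mA [B mB <-]]; exact: rect_eq.
- by move=> _; rewrite (le_lt_trans (probability_le1 _ measurableT)) ?ltry.
Qed.
End PairLaw.

Section MeasurableSets.
Context d (T : measurableType d) (R : realType).
Implicit Types (f g : T -> R) (b : R).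

Lemma measurable_preimageT f (A : set R) :
  measurable_fun setT f -> measurable A -> measurable (f @^-1` A).
Proof. by move=> mf mA; rewrite -[X in measurable X]setTI; exact: mf. Qed.

Lemma measurable_lt_set f b : measurable_fun setT f -> measurable [set x | f x < b].
Proof.
move=> mf; have -> : [set x | f x < b] = f @^-1` `]-oo, b[.
  by apply/seteqP; split => x; rewrite /= in_itv.
exact: measurable_preimageT (measurable_itv _).
Qed.

Lemma measurable_gt_set f b : measurable_fun setT f -> measurable [set x | b < f x].
Proof.
move=> mf; have -> : [set x | b < f x] = f @^-1` `]b, +oo[.
  by apply/seteqP; split => x; rewrite /= in_itv /= andbT.
exact: measurable_preimageT (measurable_itv _).
Qed.

Lemma measurable_EFin_normr f : measurable_fun setT f ->
  measurable_fun setT (fun x => `|f x|%:E).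
Proof. by move=> mf; apply/measurable_EFinP; exact: measurableT_comp mf. Qed.

Lemma measurable_pos_part f : measurable_fun setT f ->
  measurable_fun setT (fun x => pos_part (f x)).
Proof. by move=> mf; exact: measurable_maxr mf (measurable_cst _). Qed.

Lemma measurable_neg_part f : measurable_fun setT f ->
  measurable_fun setT (fun x => neg_part (f x)).
Proof. by move=> mf; exact: measurable_maxr (measurable_funN mf) (measurable_cst _). Qed.

Lemma measurable_stay_part f g : measurable_fun setT f -> measurable_fun setT g ->
  measurable_fun setT (fun x => stay_part (f x) (g x)).
Proof.
move=> mf mg; apply: measurable_funB.
  by apply: measurable_pos_part; apply: measurable_funB; exact: measurable_pos_part.
by apply: measurable_minr; exact: measurable_neg_part.
Qed.

Lemma measurable_move_part f g : measurable_fun setT f -> measurable_fun setT g ->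
  measurable_fun setT (fun x => move_part (f x) (g x)).
Proof.
move=> mf mg; apply: measurable_funB.
  by apply: measurable_minr; exact: measurable_pos_part.
by apply: measurable_pos_part; apply: measurable_funB; exact: measurable_neg_part.
Qed.
End MeasurableSets.

Section NormTriangleEquality.
Context d (T : measurableType d) (R : realType).
Variable mu : {measure set T -> \bar R}.

Lemma ae_normD_eq (a b : T -> R) :
  measurable_fun setT a -> measurable_fun setT b ->
  (\int[mu]_x `|a x + b x|%:E < +oo)%E ->
  (\int[mu]_x `|a x + b x|%:E = \int[mu]_x `|a x|%:E + \int[mu]_x `|b x|%:E)%E ->
  {ae mu, forall x, `|a x + b x| = `|a x| + `|b x|}.
Proof.
move=> ma mb fin_ab int_eq.
pose c x : R := `|a x| + `|b x| - `|a x + b x|.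
have c_ge0 x : 0 <= c x by rewrite subr_ge0 ler_normD.
have mab : measurable_fun setT (fun x => a x + b x) by exact: measurable_funD.
have mc : measurable_fun setT (fun x => (c x)%:E).
  apply/measurable_EFinP; apply: measurable_funB; last exact: measurableT_comp mab.
  by apply: measurable_funD; exact: measurableT_comp.
have int_c0 : (\int[mu]_x (c x)%:E = 0)%E.
  have split_sum : (\int[mu]_x `|a x|%:E + \int[mu]_x `|b x|%:E =
      \int[mu]_x `|a x + b x|%:E + \int[mu]_x (c x)%:E)%E.
    rewrite -!ge0_integralD //; try by [exact: measurable_EFin_normr | move=> x _; rewrite lee_fin].
    by apply: eq_integral => x _; rewrite -!EFinD /c; congr (_%:E); lra.
  have int_ge0 (f : T -> R) : (forall x, 0 <= f x) -> (0 <= \int[mu]_x (f x)%:E)%E.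
    by move=> f_ge0; apply: integral_ge0 => x _; rewrite lee_fin.
  move: split_sum fin_ab (int_ge0 _ c_ge0) (int_ge0 (fun x => `|a x + b x|) (fun x => normr_ge0 _)).
  rewrite -int_eq.
  case: (\int[mu]_x `|a x + b x|%:E)%E => [r| |] //; case: (\int[mu]_x (c x)%:E)%E => [s| |] //.
  by move=> /eqP; rewrite -EFinD eqe => /eqP r_eq _ _ _; congr (_%:E); lra.
have /(ae_eq_integral_abs mu measurableT mc).1 : (\int[mu]_x `|(c x)%:E| = 0)%E.
  by rewrite -int_c0; apply: eq_integral => x _; rewrite gee0_abs // lee_fin.
by apply: filterS => x /(_ I) /= /eqP; rewrite eqe subr_eq0 => /eqP ->.
Qed.
End NormTriangleEquality.

Section Margin.
Context d (T : measurableType d) (R : realType).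
Variable mu : {measure set T -> \bar R}.

Lemma not_negligible_measure_gt0 (A : set T) :
  measurable A -> ~ mu.-negligible A -> (0 < mu A)%E.
Proof.
by move=> mA not_neg; rewrite lt0e measure_ge0 andbT; apply/eqP => /(negligibleP _ mA).
Qed.

Lemma not_negligible_margin (X1 X2 : T -> R) :
  ~ mu.-negligible [set x | X1 x < 0 /\ 0 < X2 x] ->
  exists2 dl : R, 0 < dl & ~ mu.-negligible [set x | X1 x < - dl /\ dl < X2 x].
Proof.
move=> not_neg; apply: contrapT => no_margin; apply: not_neg.
have neg_k k : mu.-negligible [set x | X1 x < - k.+1%:R^-1 /\ k.+1%:R^-1 < X2 x].
  by apply: contrapT => not_neg; apply: no_margin; exists k.+1%:R^-1; rewrite ?invr_gt0.
apply: negligibleS (negligible_bigcup neg_k) => x [neg pos].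
have gap_gt0 : 0 < Num.min (- X1 x) (X2 x) by rewrite lt_min oppr_gt0 neg pos.
exists (Num.truncn (Num.min (- X1 x) (X2 x))^-1) => //=.
have := truncnS_gt (Num.min (- X1 x) (X2 x))^-1.
rewrite -ltf_pV2 ?posrE ?invr_gt0 ?ltr0Sn // invrK lt_min => /andP[lt1 lt2].
by split; rewrite // ltrNr.
Qed.
End Margin.


Section Cylinders.
Context d (T : measurableType d) (R : realType).

Lemma cyl_eventP (I : eqType) (X : I -> T -> R) s B x :
  cyl_event X s B x <-> (forall k, k \in s -> B k (X k x)).
Proof.
elim: s => [|k s IH]; first by rewrite /cyl_event big_nil.
rewrite /cyl_event big_cons -/(cyl_event X s B); split.
  by move=> [Bk /IH Bs] k'; rewrite in_cons => /orP[/eqP -> // | ]; exact: Bs.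
move=> Bks; split; first by apply: Bks; rewrite mem_head.
by apply/IH => k' k's; apply: Bks; rewrite in_cons k's orbT.
Qed.

Lemma measurable_cyl_event (I : Type) (X : I -> T -> R) s B :
  (forall k, measurable_fun setT (X k)) -> (forall k, measurable (B k)) ->
  measurable (cyl_event X s B).
Proof.
move=> mX mB; elim: s => [|k s IH]; first by rewrite /cyl_event big_nil.
by rewrite /cyl_event big_cons; apply: measurableI => //; exact: measurable_preimageT.
Qed.
End Cylinders.

Lemma prode_gt0 (R : realType) (I : Type) (s : seq I) (F : I -> \bar R) :
  (forall k, 0 < F k)%E -> (0 < \prod_(k <- s) F k)%E.
Proof.
by move=> F_gt0; elim: s => [|k s IH]; rewrite ?big_nil ?lte01 // big_cons mule_gt0.
Qed.

(* On the path space of [pair_array]: [Y_{m,0} > 0] for infinitely many [m >= 0]. *)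
Definition recurrently_positive {R : realType} : set (int * nat * bool -> R) :=
  [set f | forall m : nat, exists k : nat, 0 < f ((m + k)%N%:Z, 0%N, false)].

Lemma recurrently_positive_shift {R : realType} (f : int * nat * bool -> R) :
  recurrently_positive (f \o shift_i) <-> recurrently_positive f.
Proof.
have succ_site m k : (m + k)%N%:Z + 1 = (m + k.+1)%N by rewrite addnS -addn1 PoszD.
split => rec m.
  by have [k] := rec m; rewrite /= /shift_i /= succ_site; exists k.+1.
by have [k] := rec m.+1; rewrite addSnnS -succ_site; exists k.
Qed.

Lemma recurrently_positive_measurable {R : realType} :
  path_measurable (@recurrently_positive R).
Proof.
pose C (i : nat) := [set f : int * nat * bool -> R | 0 < f (i%:Z, 0%N, false)].
have mC i : path_measurable (C i).
  apply: sub_sigma_algebra; exists (i%:Z, 0%N, false), [set x : R | 0 < x].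
  by split => //; exact: measurable_gt_set 0 (@measurable_id _ R setT).
have -> : recurrently_positive = \bigcap_m \bigcup_k C (m + k)%N.
  apply/seteqP; split => [f rec m _ | f rec m]; first by have [k] := rec m; exists k.
  by have [k _] := rec m I; exists k.
rewrite -[X in path_measurable X]setCK setC_bigcap.
case: (@smallest_sigma_algebra _ setT (@coord_cylinders R (int * nat * bool)%type))
  => _ measC measU.
rewrite -setTD; apply: (measC); apply: (measU) => m.
rewrite -setTD; apply: (measC); apply: (measU) => k; exact: mC.
Qed.

Definition grid (n : nat) : seq (int * nat) :=
  [seq (i%:Z, t) | i <- iota 0 n.+1, t <- iota 0 n].

Section SJRChain.
Context d (T : measurableType d) (R : realType) (P : probability T R)
  (Y W : int -> nat -> T -> R).
Hypothesis mY : forall i t, measurable_fun setT (Y i t).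
Hypothesis mW : forall i t, measurable_fun setT (W i t).
Hypothesis invariant : forall t, same_law P (fun i => Y i t) (fun i => Y i 0%N).
Hypothesis stationary_i : stationary_under P shift_i (pair_array Y W).
Hypothesis dynamics : forall t x i,
  Y i t.+1 x = store_update (fun j => Y j t x) (fun j => W j t x) i.
Hypothesis integrable_Y : P.-integrable setT (EFin \o Y 0 0%N).

Lemma law_Y_time i t B : measurable B -> P (Y i t @^-1` B) = P (Y i 0%N @^-1` B).
Proof.
move=> mB; have := @invariant t [:: i] (fun _ => B) (fun _ => mB).
by rewrite /cyl_event !big_seq1.
Qed.

Lemma law_YW_shift i t A B : measurable A -> measurable B ->
  P (Y (i + 1) t @^-1` A `&` W (i + 1) t @^-1` B) =
  P (Y i t @^-1` A `&` W i t @^-1` B).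
Proof.
move=> mA mB; have := @stationary_i [:: (i, t, false); (i, t, true)]
  (fun k => if k.2 then B else A) (fun k => if k.2 as b return
    measurable (if b then B else A) then mB else mA).
by rewrite /cyl_event !big_cons !big_nil !setIT.
Qed.

Lemma law_Y_site (n : nat) B : measurable B ->
  P (Y n 0%N @^-1` B) = P (Y 0 0%N @^-1` B).
Proof.
move=> mB; elim: n => [//|n IH].
have shift := law_YW_shift n 0%N mB measurableT.
rewrite !preimage_setT !setIT in shift.
by rewrite -IH -shift -addn1 PoszD.
Qed.

Lemma integral_norm_Y (i : nat) t :
  (\int[P]_x `|Y i t x|%:E = \int[P]_x `|Y 0 0%N x|%:E)%E.
Proof.
have norm_ge0 (y : R) : (0 <= `|y|%:E)%E by rewrite lee_fin.
have measurable_normE := measurable_EFin_normr (@measurable_id _ R setT).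
rewrite (ge0_integral_eq_law (mY i t) (mY i 0) measurable_normE norm_ge0
  (fun B mB => law_Y_time i t mB)).
exact: ge0_integral_eq_law (mY i 0) (mY 0 0) measurable_normE norm_ge0
  (fun B mB => law_Y_site i mB).
Qed.

Lemma integral_norm_Y_lty (i : nat) t : (\int[P]_x `|Y i t x|%:E < +oo)%E.
Proof. by rewrite integral_norm_Y; case/integrableP: integrable_Y. Qed.

Lemma cancellation_negligible (i : nat) t :
  P.-negligible [set x | cancellation (fun j => Y j t x) (fun j => W j t x) i].
Proof.
pose a x := stay_part (Y i t x) (W i t x).
pose b x := move_part (Y (i%:Z - 1) t x) (W (i%:Z - 1) t x).
have ab x : a x + b x = Y i t.+1 x by rewrite dynamics store_updateE.
have ma : measurable_fun setT a by exact: measurable_stay_part.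
have mb : measurable_fun setT b by exact: measurable_move_part.
have norm_ge0 (y : R) : (0 <= `|y|%:E)%E by rewrite lee_fin.
have move_shift : (\int[P]_x `|b x|%:E =
    \int[P]_x `|move_part (Y i t x) (W i t x)|%:E)%E.
  apply: (ge0_integral_eq_law (f := fun p : R * R => `|move_part p.1 p.2|%:E)
    (X := fun x => (Y (i%:Z - 1) t x, W (i%:Z - 1) t x))
    (X' := fun x => (Y i t x, W i t x))).
  - exact: measurable_fun_pair.
  - exact: measurable_fun_pair.
  - apply/measurable_EFinP; apply: measurableT_comp => //.
    exact: measurable_move_part measurable_fst measurable_snd.
  - by move=> p; exact: norm_ge0.
  - apply: pair_law_eq => // A B mA mB.
    by rewrite -(law_YW_shift (i%:Z - 1) t mA mB) subrK.
have mass : (\int[P]_x `|a x + b x|%:E =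
    \int[P]_x `|a x|%:E + \int[P]_x `|b x|%:E)%E.
  under eq_integral do rewrite ab.
  rewrite (integral_norm_Y i t.+1) -(integral_norm_Y i t) move_shift.
  rewrite -ge0_integralD //.
  - by apply: eq_integral => x _; rewrite -EFinD normr_stay_move.
  - exact: measurable_EFin_normr ma.
  - exact: measurable_EFin_normr (measurable_move_part (mY i t) (mW i t)).
have mass_lty : (\int[P]_x `|a x + b x|%:E < +oo)%E.
  by under eq_integral do rewrite ab; exact: integral_norm_Y_lty.
have [N [mN N0 sub]] := ae_normD_eq ma mb mass_lty mass.
exists N; split => // x [st_gt0 mv_lt0]; apply: sub => /= /eqP.
by rewrite lt_eqF // normrD_lt_gt0_lt0.
Qed.

Hypothesis ergodic_i : ergodic_under P shift_i (pair_array Y W).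

Lemma recurrently_positive_ae : ~ P.-negligible [set x | 0 < Y 0 0%N x] ->
  {ae P, forall x, forall m : nat, exists k : nat, 0 < Y (m + k)%N 0%N x}.
Proof.
move=> pos0.
pose U m := \bigcup_k [set x | 0 < Y (m + k)%N 0%N x].
pose S := \bigcap_m U m.
have mU m : measurable (U m).
  by apply: bigcupT_measurable => k; exact: measurable_gt_set.
have mS : measurable S by exact: bigcapT_measurable.
have S_path : (fun x j => pair_array Y W j x) @^-1` recurrently_positive = S.
  apply/seteqP; split => [x rec m _ | x rec m]; first by have [k] := rec m; exists k.
  by have [k _] := rec m I; exists k.
have S01 : P S = 0%E \/ P S = 1%E.
  rewrite -S_path; apply: ergodic_i; first exact: recurrently_positive_measurable.
  exact: recurrently_positive_shift.
pose E m := [set x | 0 < Y m 0%N x].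
have mE m : measurable (E m) by exact: measurable_gt_set.
have PE0_gt0 : (0 < P (E 0%N))%E := not_negligible_measure_gt0 (mE 0%N) pos0.
have PU_ge m : (P (E 0%N) <= P (U m))%E.
  rewrite -(law_Y_site m (measurable_gt_set 0 (@measurable_id _ R setT))).
  by apply: le_measure; rewrite ?inE //; [exact: mE | move=> x Ex; exists 0%N; rewrite ?addn0].
have U_noninc : nonincreasing_seq U.
  move=> m m' le_mm'; apply/subsetPset => x [k _ pos].
  by exists (m' - m + k)%N => //; rewrite addnA subnKC.
have PS_ge : (P (E 0%N) <= P S)%E.
  have U0_lty : (P (U 0%N) < +oo)%E.
    by rewrite (le_lt_trans (probability_le1 P (mU 0%N))) ?ltry.
  move/cvge_to_ge: (nonincreasing_cvg_mu U0_lty mU mS U_noninc); apply.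
  exact: nearW.
have PS1 : P S = 1%E.
  by case: S01 => // PS0; move: (lt_le_trans PE0_gt0 PS_ge); rewrite PS0 ltxx.
exists (~` S); split; first exact: measurableC.
  by rewrite probability_setC // PS1 subee.
by move=> x not_rec Sx; apply: not_rec => m; have [k _] := Sx m I; exists k.
Qed.

Lemma exists_sign_change :
  ~ {ae P, forall x, 0 <= Y 0 0%N x} -> ~ {ae P, forall x, Y 0 0%N x <= 0} ->
  exists2 n : nat, (0 < n)%N &
    ~ P.-negligible [set x | Y 0 0%N x < 0 /\ 0 < Y n 0%N x].
Proof.
move=> not_ge0 not_le0.
have pos0 : ~ P.-negligible [set x | 0 < Y 0 0%N x].
  by apply: contra_not not_le0; apply: negligibleS => x /= /negP; rewrite -ltNge.
have rec_ae := recurrently_positive_ae pos0.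
apply: contrapT => no_change; apply: not_ge0.
have neg_k k : P.-negligible [set x | Y 0 0%N x < 0 /\ 0 < Y k.+1 0%N x].
  by apply: contrapT => not_neg; apply: no_change; exists k.+1.
apply: negligibleS (negligibleU rec_ae (negligible_bigcup neg_k)) => x /= /negP.
rewrite -ltNge => neg_x.
have [rec | not_rec] := pselect (forall m : nat, exists k : nat, 0 < Y (m + k)%N 0%N x).
  by right; have [k pos] := rec 1%N; exists k.
by left.
Qed.

Hypothesis W_indep : mutually_independent P (fun k : int * nat => W k.1 k.2).
Hypothesis W_ident : forall i t B, measurable B ->
  P (W i t @^-1` B) = P (W 0 0%N @^-1` B).
Hypothesis W_near0 : forall e : R, 0 < e ->
  (0 < P (W 0 0%N @^-1` [set x : R | (- e < x < e)%R]))%E.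
Hypothesis YW_indep :
  indep_families P (fun i => Y i 0%N) (fun k : int * nat => W k.1 k.2).

Definition small_weights n e :=
  cyl_event (fun k : int * nat => W k.1 k.2) (grid n) (fun=> [set x | - e < x < e]).

Definition sign_gap (n : nat) dl := [set x | Y 0 0%N x < - dl /\ dl < Y n 0%N x].

Lemma measurable_small_weights n e : measurable (small_weights n e).
Proof.
apply: measurable_cyl_event => [k|_]; first exact: mW.
by rewrite -set_itvoo; exact: measurable_itv.
Qed.

Lemma measurable_sign_gap n dl : measurable (sign_gap n dl).
Proof. by apply: measurableI; [exact: measurable_lt_set | exact: measurable_gt_set]. Qed.

Lemma small_weights_gt0 n e : 0 < e -> (0 < P (small_weights n e))%E.
Proof.
move=> e_gt0; have uniq_grid : uniq (grid n).
  by rewrite allpairs_uniq ?iota_uniq // => -[? ?] [? ?] _ _ /= [-> ->].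
rewrite /small_weights W_indep //; last by move=> _; rewrite -set_itvoo; exact: measurable_itv.
apply: prode_gt0 => k; rewrite W_ident ?W_near0 //.
by rewrite -set_itvoo; exact: measurable_itv.
Qed.

Lemma sign_gap_small_weights_gt0 n dl e : (0 < n)%N -> 0 < e ->
  ~ P.-negligible (sign_gap n dl) -> (0 < P (sign_gap n dl `&` small_weights n e))%E.
Proof.
move=> n_gt0 e_gt0 gap.
pose B (i : int) := if i == 0 then [set y : R | y < - dl] else [set y | dl < y].
have mB i : measurable (B i).
  by rewrite /B; case: ifP => _; [apply: measurable_lt_set | apply: measurable_gt_set];
    exact: (@measurable_id _ R setT).
have gapE : sign_gap n dl = cyl_event (fun i => Y i 0%N) [:: 0; n%:Z] B.
  have n_neq0 : (n%:Z == 0) = false by rewrite gt_eqF // ltz_nat.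
  by rewrite /cyl_event !big_cons big_nil setIT /B eqxx n_neq0.
rewrite gapE YW_indep //; last by move=> _; rewrite -set_itvoo; exact: measurable_itv.
by rewrite mule_gt0 ?small_weights_gt0 // -gapE not_negligible_measure_gt0 //;
  exact: measurable_sign_gap.
Qed.

Lemma sign_gap_small_weights_negligible n dl : (0 < n)%N ->
  P.-negligible (sign_gap n dl `&` small_weights n (dl / n%:R)).
Proof.
move=> n_gt0.
apply: negligibleS (negligible_bigcup (fun i => negligible_bigcup
  (cancellation_negligible i))) => x [[neg_start pos_start] /cyl_eventP small].
apply: contrapT => no_cancel.
have scale : n%:R * (dl / n%:R) = dl by rewrite mulrC divfK // pnatr_eq0 -lt0n.
apply: (@crossing_contradiction _ (fun i t => Y i t x) (fun i t => W i t x) n (dl / n%:R)).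
- by move=> i t; rewrite dynamics.
- exact: n_gt0.
- move=> i t le_in lt_tn; rewrite ltr_norml; apply: (small (i%:Z, t)).
  by apply: allpairs_f; rewrite mem_iota ?ltnS.
- by rewrite scale.
- by rewrite scale.
- by move=> i t canc; apply: no_cancel; exists i => //; exists t.
Qed.
End SJRChain.

Theorem proposition3p10 (d : measure_display) (T : measurableType d)
  (R : realType) (P : probability T R)
  (Y W : int -> nat -> T -> R) :
  (forall i t, measurable_fun setT (W i t)) ->
  (forall i t, measurable_fun setT (Y i t)) ->
  mutually_independent P (fun k : int * nat => W k.1 k.2) ->
  (forall i t (B : set R), measurable B ->
     P (W i t @^-1` B) = P (W (0:int) 0%N @^-1` B)) ->
  (forall e : R, 0 < e -> (0 < P (W (0:int) 0%N @^-1` [set x : R | (- e < x < e)%R]))%E) ->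
  indep_families P (fun i => Y i 0%N) (fun k : int * nat => W k.1 k.2) ->
  (forall t w i, Y i t.+1 w =
     store_update (fun j => Y j t w) (fun j => W j t w) i) ->
  (forall t, same_law P (fun i => Y i t) (fun i => Y i 0%N)) ->
  P.-integrable setT (EFin \o Y (0:int) 0%N) ->
  stationary_under P shift_i (pair_array Y W) ->
  ergodic_under P shift_i (pair_array Y W) ->
  stationary_under P shift_t (pair_array Y W) ->
  ergodic_under P shift_t (pair_array Y W) ->
  {ae P, forall w, 0 <= Y (0:int) 0%N w} \/ {ae P, forall w, Y (0:int) 0%N w <= 0}.
Proof.
move=> mW mY W_indep W_ident W_near0 YW_indep dyn inv intY stI ergI _ _.
apply: contrapT => /not_orP[not_ge0 not_le0].
have [n n_gt0 change] := exists_sign_change mY stI ergI not_ge0 not_le0.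
have [dl dl_gt0 gap] := not_negligible_margin change.
have e_gt0 : 0 < dl / n%:R by rewrite divr_gt0 ?ltr0n.
have gap_small_gt0 :=
  sign_gap_small_weights_gt0 mY W_indep W_ident W_near0 YW_indep n_gt0 e_gt0 gap.
have gap_small_negligible :=
  sign_gap_small_weights_negligible mY mW inv stI dyn intY dl n_gt0.
move: gap_small_gt0; rewrite (measure_negligible _ gap_small_negligible) ?ltxx //.
exact: measurableI (measurable_sign_gap mY n dl) (measurable_small_weights mW n _).
Qed.
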